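(* Let $N=r+1$ and let $M_n:=M_{1,n}$ and $M_{\alpha,n}$ ($\alpha\in[1,N]$, $n\in\mathbb Z$) be the difference operators $$M_{\alpha,n}=\sum_{I\subset[1,N],\,|I|=\alpha}x_I^{\,n}\prod_{i\in I,\ j\notin I}\frac{x_i}{x_i-x_j}\,\Gamma_I,$$ with $x_I=\prod_{i\in I}x_i$, $\Gamma_I=\prod_{i\in I}\Gamma_i$, $(\Gamma_if)(x)=f(\dots,qx_i,\dots)$. Let $m(u)=\sum_{n\in\mathbb{Z}}u^nM_n$. Then for every $\alpha\in[1,N]$ and $n\in\mathbb{Z}$, $M_{\alpha,n}$ equals the coefficient of $(u_1u_2\cdots u_\alpha)^n$ in the formal series $$\prod_{1\le i<j\le\alpha}\Big(1-q\frac{u_j}{u_i}\Big)\,m(u_1)m(u_2)\cdots m(u_\alpha),$$ i.e. $\sum_{\alpha\text{-}\mathrm{currents}}\,$: $M_{\alpha,n}=\sum_{S}c_S\,M_{n+s_1}\cdots M_{n+s_\alpha}$ where $\prod_{i<j}(1-qu_j/u_i)=\sum_S c_S\prod_i u_i^{-s_i}$. Equivalently, with $m_\alpha(z)=\sum_nz^nM_{\alpha,n}$, $m_\alpha$ is obtained from this series by extracting the coefficients of $(u_1\cdots u_\alpha)^n$.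
   Context: The operators act on symmetric functions in $x_1,\dots,x_N$. The product $\prod_{i<j}(1-qu_j/u_i)$ is a Laurent polynomial, so each coefficient extraction is a finite sum of ordered products of the operators $M_n$. *)

From HB Require Import structures.
From mathcomp Require Import all_boot all_order all_fingroup all_algebra.
Set Implicit Arguments. Unset Strict Implicit. Unset Printing Implicit Defensive.
Import Order.TTheory GRing.Theory Num.Theory.
Local Open Scope ring_scope.

Section Ops.
Variables (F : fieldType) (N : nat) (q : F).

Definition shift (I : {set 'I_N}) (x : 'I_N -> F) : 'I_N -> F :=
  fun k => if k \in I then q * x k else x k.

Definition Mop (a : nat) (n : int) (f : ('I_N -> F) -> F) : ('I_N -> F) -> F :=
  fun x => \sum_(I : {set 'I_N} | #|I| == a)
     (\prod_(i in I) x i) ^ n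
     * (\prod_(i in I) \prod_(j in ~: I) (x i / (x i - x j)))
     * f (shift I x).

Definition Mprod (l : seq int) (f : ('I_N -> F) -> F) : ('I_N -> F) -> F :=
  foldr (fun k g => Mop 1 k g) f l.

(* Expansion of prod_{i<j} (1 - q u_j/u_i): choosing the term -q u_j/u_i exactly
   for the pairs (i,j) in P gives (-q)^|P| prod_k u_k^{-s_k(P)} with
   s_k(P) = #{j | (k,j) in P} - #{i | (i,k) in P}. *)
Definition spair (a : nat) (P : {set 'I_a * 'I_a}) (k : 'I_a) : int :=
  (#|[set j | (k, j) \in P]|)%:Z - (#|[set i | (i, k) \in P]|)%:Z.

(* coefficient of (u_1...u_a)^n in prod_{i<j}(1 - q u_j/u_i) m(u_1)...m(u_a), applied to f at x *)
Definition current_sum (a : nat) (n : int) (f : ('I_N -> F) -> F) (x : 'I_N -> F) : F :=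
  \sum_(P : {set 'I_a * 'I_a} | P \subset [set p : 'I_a * 'I_a | (val p.1 < val p.2)%N])
     (- q) ^+ #|P| * Mprod [seq n + spair P k | k <- enum 'I_a] f x.

End Ops.

From HB Require Import structures.
From mathcomp Require Import all_boot all_order all_fingroup all_algebra ring.
From Stdlib Require Import FunctionalExtensionality.
Set Implicit Arguments. Unset Strict Implicit. Unset Printing Implicit Defensive.
Import Order.TTheory GRing.Theory Num.Theory.
Local Open Scope ring_scope.

(* Expanding each M_k = sum_i x_i^k c_i(x) Gamma_i, an ordered product of the M's becomes
   a sum over words s = i_1 ... i_a of indices, the k-th letter contributing the variable
   y_k := x_(i_k) as already shifted by Gamma_(i_1), ..., Gamma_(i_(k-1)).  Summing over the
   pair sets P reassembles, for each word, the factor prod_(k<l) (1 - q y_k / y_l).  If a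
   letter repeats, then y_l = q y_k at its first repetition and the word contributes 0.  For a
   word of distinct letters these factors cancel the denominators x_(i_l) - q x_(i_k) produced
   by the earlier shifts, leaving the summand of M_(a,n) for I = {i_1, ..., i_a} times
   prod_(k<l) x_(i_k) / (x_(i_k) - x_(i_l)); summed over the orderings of I this weight is 1
   by Lagrange interpolation. *)

Lemma sum_subset_prod (R : comPzSemiRingType) (T : finType) (A : {set T}) (g : T -> R) :
  \sum_(P : {set T} | P \subset A) \prod_(p in P) g p = \prod_(p in A) (1 + g p).
Proof.
pose gA p := if p \in A then g p else 0.
transitivity (\prod_p (gA p + 1)); last first.
  rewrite [RHS]big_mkcond; apply: eq_bigr => p _ /=.
  by rewrite /gA; case: ifP => _; [rewrite addrC | rewrite add0r].
rewrite (bigA_distr _ _ gA (fun=> 1)) [LHS]big_mkcond; apply: eq_bigr => P _ /=.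
case: ifP => [/subsetP sPA | /negbT/subsetPn[p pP pA]].
  by rewrite [LHS]big_mkcond; apply: eq_bigr => p _; rewrite /gA; case: ifP => // /sPA ->.
by rewrite (bigD1 p) //= /gA pP (negbTE pA) mul0r.
Qed.

Lemma prodfXz (F : fieldType) (I : Type) (r : seq I) (P : pred I) (G : I -> F) (n : int) :
  \prod_(i <- r | P i) G i ^ n = (\prod_(i <- r | P i) G i) ^ n.
Proof. by rewrite (big_morph (fun y => y ^ n) (fun y z => expfzMl y z n) (exp1rz _ n)). Qed.

Lemma prod_ord_recl_cond (R : pzSemiRingType) m (P : pred nat) (G : nat -> R) :
  \prod_(j < m.+1 | P j) G j = (if P 0%N then G 0%N else 1) * \prod_(j < m | P j.+1) G j.+1.
Proof. by rewrite big_mkcond big_ord_recl [in RHS]big_mkcond. Qed.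

Lemma prod_ltn_pairs_recl (R : pzSemiRingType) m (G : nat -> nat -> R) :
  \prod_(i < m.+1) \prod_(j < m.+1 | (i < j)%N) G i j =
  (\prod_(j < m) G 0%N j.+1) * \prod_(i < m) \prod_(j < m | (i < j)%N) G i.+1 j.+1.
Proof.
rewrite big_ord_recl prod_ord_recl_cond /= mul1r; congr (_ * _).
by apply: eq_bigr => i _; rewrite prod_ord_recl_cond /= mul1r.
Qed.

Section PairExpansion.
Variables (F : fieldType) (q : F).

Definition pair_prod (y : seq F) :=
  \prod_(i < size y) \prod_(j < size y | (i < j)%N) (1 - q * y`_i / y`_j).

Lemma pair_prod_cons y0 y :
  pair_prod (y0 :: y) = \prod_(j < size y) (1 - q * y0 / y`_j) * pair_prod y.
Proof. exact: (prod_ltn_pairs_recl _ (fun i j => 1 - q * (y0 :: y)`_i / (y0 :: y)`_j)). Qed.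

Variables (a : nat) (y : seq F).
Hypotheses (size_y : size y = a) (y_neq0 : forall k : 'I_a, y`_k != 0).

Lemma prod_exp_spair (n : int) (P : {set 'I_a * 'I_a}) :
  \prod_(k < a) y`_k ^ (n + spair P k) =
  (\prod_(k < a) y`_k ^ n) * \prod_(p in P) (y`_p.1 / y`_p.2).
Proof.
have expE (k : 'I_a) : y`_k ^ (n + spair P k) =
    y`_k ^ n * (\prod_(j | (k, j) \in P) y`_k / \prod_(i | (i, k) \in P) y`_k).
  have uk : y`_k \is a GRing.unit by rewrite unitfE.
  rewrite /spair exprzDr // exprzDr // -exprnN !prodr_const.
  congr (_ * (_ / _)); [congr (_ ^ Posz _) | congr (_ ^+ _)];
    by apply: eq_card => j; rewrite inE.
rewrite (eq_bigr _ (fun k _ => expE k)) big_split /= !prodf_div; congr (_ * (_ / _)).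
  by rewrite pair_big_dep; apply: eq_bigl => -[i j].
by rewrite (exchange_big_dep xpredT) //= pair_big_dep; apply: eq_bigl => -[i j].
Qed.

Lemma sum_spair_pair_prod (n : int) :
  \sum_(P : {set 'I_a * 'I_a} | P \subset [set p : 'I_a * 'I_a | (val p.1 < val p.2)%N])
     (- q) ^+ #|P| * \prod_(k < a) y`_k ^ (n + spair P k)
  = (\prod_(k < a) y`_k ^ n) * pair_prod y.
Proof.
under eq_bigr => P _ do
  rewrite prod_exp_spair mulrCA -prodr_const -big_split /=.
rewrite -mulr_sumr sum_subset_prod /pair_prod size_y pair_big_dep /=; congr (_ * _).
apply: congr_big => [//|[i j]|[i j] _] /=; first by rewrite inE.
by rewrite mulNr mulrA.
Qed.

End PairExpansion.

Section Lagrange.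
Variables (F : fieldType) (T : finType) (I : {set T}) (t : T -> F).
Hypotheses (t_inj : {in I &, injective t}) (I_neq0 : I != set0).

Let basis i : {poly F} :=
  (\prod_(j in I :\ i) (t i - t j))^-1 *: \prod_(j in I :\ i) ('X - (t j)%:P).

Lemma sum_lagrange_basis_poly : \sum_(i in I) basis i = 1.
Proof.
have subt_neq0 i j : i \in I -> j \in I -> j != i -> t i - t j != 0.
  move=> iI jI; rewrite subr_eq0; apply: contra => /eqP tij.
  by rewrite (t_inj jI iI) ?tij.
apply/eqP; rewrite -subr_eq0; apply/eqP.
apply: (@roots_geq_poly_eq0 _ _ [seq t k | k <- enum I]).
- apply/allP => _ /mapP[k kI ->]; rewrite mem_enum in kI.
  rewrite /root hornerD hornerN hornerC horner_sum (bigD1 k) //= big1; last first.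
    move=> i /andP[iI ik]; rewrite hornerZ horner_prod [X in _ * X](bigD1 k) /=; last by rewrite !inE eq_sym ik.
    by rewrite hornerXsubC subrr mul0r mulr0.
  rewrite addr0 hornerZ horner_prod.
  under [X in _ * X]eq_bigr => j _ do rewrite hornerXsubC.
  rewrite mulVf ?subrr //; apply/prodf_neq0 => j; rewrite !inE => /andP[jk jI].
  exact: subt_neq0.
- by rewrite map_inj_in_uniq ?enum_uniq // => i j; rewrite !mem_enum; apply: t_inj.
- rewrite size_map -cardE; apply: leq_trans (size_polyD _ _) _.
  rewrite size_polyN size_poly1 geq_max card_gt0 I_neq0 andbT.
  apply: (big_ind (fun r : {poly F} => size r <= #|I|)%N); first by rewrite size_poly0.
    by move=> r1 r2 h1 h2; apply: leq_trans (size_polyD _ _) _; rewrite geq_max h1.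
  move=> i iI; apply: leq_trans (size_scale_leq _ _) _.
  by rewrite -big_enum size_prod_XsubC -cardE (cardsD1 i I) iI.
Qed.

Lemma sum_lagrange_basis z :
  \sum_(i in I) \prod_(j in I :\ i) ((z - t j) / (t i - t j)) = 1.
Proof.
have := congr1 (horner^~ z) sum_lagrange_basis_poly.
rewrite horner_sum hornerC => sum1; rewrite -[RHS]sum1; apply: eq_bigr => i iI.
rewrite hornerZ horner_prod mulrC -prodf_div.
by apply: eq_bigr => j _; rewrite hornerXsubC.
Qed.

End Lagrange.

Section Words.
Variables (F : fieldType) (N : nat) (q : F) (f : ('I_N -> F) -> F).
Implicit Types (x : 'I_N -> F) (B I : {set 'I_N}) (s : seq 'I_N).

Definition shift1 (i : 'I_N) x := shift q [set i] x.

Definition coef1 x (i : 'I_N) := \prod_(j in ~: [set i]) (x i / (x i - x j)).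

Fixpoint words m : seq (seq 'I_N) :=
  if m is m'.+1 then [seq i :: s | i <- enum 'I_N, s <- words m'] else [:: [::]].

Fixpoint word_vars x s : seq F :=
  if s is i :: s' then x i :: word_vars (shift1 i x) s' else [::].

Fixpoint word_coef x s : F :=
  if s is i :: s' then coef1 x i * word_coef (shift1 i x) s' else f x.

Lemma size_words m s : s \in words m -> size s = m.
Proof.
elim: m s => [|m IHm] s /=; first by rewrite inE => /eqP->.
by case/allpairsP => -[i t] /= [_ /IHm <- ->].
Qed.

Lemma Mop1E (g : ('I_N -> F) -> F) x k :
  Mop q 1 k g x = \sum_i x i ^ k * coef1 x i * g (shift1 i x).
Proof.
rewrite /Mop (reindex_omap set1 unset1) => [|A /cards1P[i ->] /[!set1K]//].
apply: congr_big => // [i|i _]; first by rewrite set1K cards1 !eqxx.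
by rewrite big_set1 /coef1 big_set1.
Qed.

Lemma Mprod_words l x :
  Mprod q l f x = \sum_(s <- words (size l))
    (\prod_(k < size l) (word_vars x s)`_k ^ l`_k) * word_coef x s.
Proof.
elim: l x => [|k l IHl] x /=; first by rewrite big_seq1 big_ord0 mul1r.
rewrite Mop1E big_allpairs_dep big_enum /=; apply: eq_bigr => i _.
rewrite IHl mulr_sumr; apply: eq_bigr => s _ /=.
by rewrite big_ord_recl /=; ring.
Qed.

Lemma size_word_vars x s : size (word_vars x s) = size s.
Proof. by elim: s x => //= i s IHs x; rewrite IHs. Qed.

Variable n : int.
Hypothesis q_neq0 : q != 0.

Definition word_term x s :=
  let y := word_vars x s in
  (\prod_(k < size y) y`_k ^ n) * pair_prod q y * word_coef x s.

Lemma shift_neq0 B x : (forall j, x j != 0) -> forall j, shift q B x j != 0.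
Proof. by move=> x_neq0 j; rewrite /shift; case: ifP; rewrite ?mulf_neq0. Qed.

Lemma word_vars_neq0 x s : (forall j, x j != 0) ->
  forall k : 'I_(size s), (word_vars x s)`_k != 0.
Proof.
elim: s x => [|i s IHs] x x_neq0 [[|k] //= ltks].
exact: (IHs _ (shift_neq0 _ x_neq0) (@Ordinal (size s) k ltks)).
Qed.

Lemma current_sum_words a x : (forall j, x j != 0) ->
  current_sum q a n f x = \sum_(s <- words a) word_term x s.
Proof.
move=> x_neq0; rewrite /current_sum.
under eq_bigr => P _ do rewrite Mprod_words size_map size_enum_ord big_distrr /=.
rewrite exchange_big big_seq [RHS]big_seq; apply: eq_bigr => s /size_words size_s.
have size_y : size (word_vars x s) = a by rewrite size_word_vars.
rewrite /word_term size_y -(sum_spair_pair_prod q size_y); last first.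
  by rewrite -size_s; apply: word_vars_neq0.
rewrite big_distrl /=; apply: eq_bigr => P _; rewrite mulrA; congr (_ * _ * _).
by apply: eq_bigr => k _; rewrite (nth_map k) ?size_enum_ord // nth_ord_enum.
Qed.

Lemma word_term_cons x i s : word_term x (i :: s) =
  x i ^ n * coef1 x i * (\prod_(j < size s) (1 - q * x i / (word_vars (shift1 i x) s)`_j))
  * word_term (shift1 i x) s.
Proof. by rewrite /word_term /= big_ord_recl pair_prod_cons size_word_vars; ring. Qed.

Lemma nth_word_vars_index x i s : i \in s -> (word_vars x s)`_(index i s) = x i.
Proof.
elim: s x => [|j s IHs] x //=; rewrite inE eq_sym.
have [-> //|neq_ji /= i_s] := eqVneq j i.
by rewrite IHs // /shift1 /shift in_set1 eq_sym (negbTE neq_ji).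
Qed.

Lemma word_term_nonuniq x s : (forall j, x j != 0) -> ~~ uniq s -> word_term x s = 0.
Proof.
elim: s x => [|i s IHs] x x_neq0 //=; rewrite negb_and negbK word_term_cons.
case/orP => [i_s | not_uniq_s]; last by rewrite IHs ?mulr0 //; apply: shift_neq0.
have idx_i : (index i s < size s)%N by rewrite index_mem.
rewrite (bigD1 (Ordinal idx_i)) //=.
rewrite nth_word_vars_index // /shift1 /shift in_set1 eqxx.
by rewrite divff ?mulf_neq0 // subrr !mul0r mulr0 mul0r.
Qed.

Lemma shift0 x : shift q set0 x = x.
Proof. by apply: functional_extensionality => j; rewrite /shift inE. Qed.

Lemma shift1_shift B x i : i \notin B -> shift1 i (shift q B x) = shift q (i |: B) x.
Proof.
move=> iNB; apply: functional_extensionality => j; rewrite /shift1 /shift !inE.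
by have [->|] := eqVneq j i; rewrite ?(negbTE iNB).
Qed.

Lemma word_vars_shift B x s : uniq s -> {in s, forall j, j \notin B} ->
  word_vars (shift q B x) s = map x s.
Proof.
elim: s B => [|i s IHs] B //= /andP[iNs uniq_s] sNB.
have iNB : i \notin B by apply: sNB; rewrite mem_head.
rewrite shift1_shift // IHs // => [|j j_s]; first by rewrite /shift (negbTE iNB).
rewrite !inE negb_or sNB ?inE ?j_s ?orbT // andbT.
by apply: contraNneq iNs => <-.
Qed.

Lemma coef1_shift B x i s : i \notin B -> i \notin s -> uniq s ->
  {in s, forall j, j \notin B} ->
  coef1 (shift q B x) i = (\prod_(j in B) (x i / (x i - q * x j))) *
    (\prod_(j <- s) (x i / (x i - x j))) *
    \prod_(j in ~: (B :|: [set:: i :: s])) (x i / (x i - x j)).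
Proof.
move=> iNB iNs uniq_s sNB; rewrite /coef1 {1 2}/shift (negbTE iNB).
rewrite (bigID (mem B)) /= -mulrA; congr (_ * _).
  apply: eq_big => j; first by rewrite !inE; case: eqVneq => // ->; rewrite (negbTE iNB).
  by move=> /andP[_ jB]; rewrite /shift jB.
rewrite (bigID (mem s)) /= big_uniq //; congr (_ * _).
  apply: eq_big => j; last by move=> /andP[/andP[_ jNB] _]; rewrite /shift (negbTE jNB).
  rewrite !inE; case j_s: (j \in s); rewrite ?andbF // (sNB _ j_s) !andbT.
  by apply: contraNneq iNs => <-.
apply: eq_big => j; last by move=> /andP[/andP[_ jNB] _]; rewrite /shift (negbTE jNB).
by rewrite !inE; case: (j == i); case: (j \in B); case: (j \in s).
Qed.

Fixpoint order_weight x s : F :=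
  if s is i :: s' then (\prod_(j <- s') (x i / (x i - x j))) * order_weight x s' else 1.

Lemma word_term_shift_uniq B x s : (forall j, x j != 0) ->
  (forall i j, i != j -> x i != q * x j) -> uniq s -> {in s, forall j, j \notin B} ->
  word_term (shift q B x) s = (\prod_(i <- s) x i ^ n) *
    (\prod_(i <- s) \prod_(j in B) (x i / (x i - q * x j))) *
    (\prod_(i <- s) \prod_(j in ~: (B :|: [set:: s])) (x i / (x i - x j))) *
    order_weight x s * f (shift q (B :|: [set:: s]) x).
Proof.
move=> x_neq0 x_neq_qx; elim: s B => [|i s IHs] B.
  move=> _ _; rewrite /word_term /pair_prod /= !big_ord0 !big_nil.
  by rewrite set_nil setU0 !mul1r.
move=> /= /andP[iNs uniq_s] sNB.
have iNB : i \notin B by apply: sNB; rewrite mem_head.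
have s'NB : {in s, forall j, j \notin B} by move=> j j_s; apply: sNB; rewrite inE j_s orbT.
have sNiB : {in s, forall j, j \notin i |: B}.
  by move=> j j_s; rewrite !inE negb_or s'NB // andbT; apply: contraNneq iNs => <-.
rewrite word_term_cons shift1_shift // IHs // (coef1_shift x iNB iNs uniq_s s'NB).
have shift_i : shift q B x i = x i by rewrite /shift (negbTE iNB).
rewrite (word_vars_shift _ uniq_s sNiB) shift_i.
have -> : \prod_(j < size s) (1 - q * x i / (map x s)`_j) = \prod_(j <- s) (1 - q * x i / x j).
  by rewrite (big_nth i) big_mkord; apply: eq_bigr => j _; rewrite (nth_map i).
have cancel_i : \prod_(k <- s) (x k / (x k - q * x i)) * \prod_(j <- s) (1 - q * x i / x j) = 1.
  rewrite -big_split big_seq big1 // => k k_s /=.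
  have x_k_neq : x k - q * x i != 0.
    by rewrite subr_eq0 x_neq_qx //; apply: contraNneq iNs => <-.
  by field; rewrite x_neq0 x_k_neq.
have -> : \prod_(k <- s) \prod_(j in i |: B) (x k / (x k - q * x j)) =
    \prod_(k <- s) (x k / (x k - q * x i)) * \prod_(k <- s) \prod_(j in B) (x k / (x k - q * x j)).
  by rewrite -big_split; apply: eq_bigr => k _; rewrite big_setU1.
have -> : (i |: B) :|: [set:: s] = B :|: [set:: i :: s] by rewrite set_cons setUCA setUA.
by rewrite !big_cons /= -[RHS]mul1r -[X in _ = X * _]cancel_i; ring.
Qed.

Definition Mop_term x I := (\prod_(i in I) x i) ^ n *
  (\prod_(i in I) \prod_(j in ~: I) (x i / (x i - x j))) * f (shift q I x).

Lemma MopE a x : Mop q a n f x = \sum_(I : {set 'I_N} | #|I| == a) Mop_term x I.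
Proof. by []. Qed.

Lemma word_term_uniq x s : (forall j, x j != 0) ->
  (forall i j, i != j -> x i != q * x j) -> uniq s ->
  word_term x s = Mop_term x [set:: s] * order_weight x s.
Proof.
move=> x_neq0 x_neq_qx uniq_s.
rewrite -{1}(shift0 x) word_term_shift_uniq // => [|j]; last by rewrite inE.
rewrite set0U /Mop_term.
have prod_s (G : 'I_N -> F) : \prod_(k <- s) G k = \prod_(k in [set:: s]) G k.
  by rewrite big_uniq //; apply: eq_bigl => j; rewrite inE.
rewrite !prod_s -prodfXz [X in _ * X * _ * _ * _]big1 ?mulr1 => [|k _]; last exact: big_set0.
by rewrite mulrAC.
Qed.

Definition enumerates s I := uniq s && ([set:: s] == I).

Lemma enumerates_cons i s I : i \in I -> enumerates (i :: s) I = enumerates s (I :\ i).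
Proof.
rewrite /enumerates => iI /=; case i_s: (i \in s) => /=.
  by case: eqP; rewrite ?andbF // => /setP/(_ i); rewrite !inE eqxx i_s.
congr (_ && _); apply/eqP/eqP => /setP sI; apply/setP => j.
  by move: (sI j); rewrite !inE; case: eqVneq => [->|] //=; rewrite i_s.
by move: (sI j); rewrite !inE; case: eqVneq => [->|] //= _ ->; rewrite ?iI.
Qed.

Lemma sum_order_weight x : (forall j, x j != 0) -> (forall i j, i != j -> x i != x j) ->
  forall a I, #|I| = a -> \sum_(s <- words a | enumerates s I) order_weight x s = 1.
Proof.
move=> x_neq0 x_inj; elim=> [|a IHa] I cardI.
  move/cards0_eq: cardI => ->; rewrite big_cons big_nil /enumerates /= addr0.
  by rewrite set_nil eqxx.
rewrite big_mkcond /= big_allpairs_dep big_enum /=.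
under eq_bigr => i _ do rewrite -big_mkcond.
rewrite (bigID (mem I)) /= [X in _ + X]big1 ?addr0 => [|i iNI]; last first.
  by apply: big1 => s /andP[_ /eqP sI]; move: iNI; rewrite -sI inE mem_head.
(* x_i / (x_i - x_j) is the Lagrange basis factor (0 - t_j) / (t_i - t_j) for t = 1/x. *)
rewrite -[RHS](@sum_lagrange_basis _ _ I (fun i => (x i)^-1) _ _ 0); last 2 first.
- by move=> i j _ _ /invr_inj/eqP; apply: contraTeq; apply: x_inj.
- by rewrite -card_gt0 cardI.
apply: eq_bigr => i iI.
under eq_bigl => s do rewrite enumerates_cons //.
rewrite -[RHS]mulr1 -(IHa (I :\ i)); last by move: cardI; rewrite (cardsD1 i) iI => -[].
rewrite mulr_sumr; apply: eq_bigr => s /andP[uniq_s /eqP sI] /=; congr (_ * _).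
rewrite big_uniq //; apply: eq_big => j; first by rewrite -sI inE.
move=> j_s; have : j \in I :\ i by rewrite -sI inE.
rewrite !inE => /andP[ji _].
have xj_neq_xi := x_inj _ _ ji.
by field; rewrite !x_neq0 mulN1r !subr_eq0 xj_neq_xi eq_sym xj_neq_xi.
Qed.

Lemma sum_uniq_words_by_support a (G : {set 'I_N} -> F) (H : seq 'I_N -> F) :
  \sum_(s <- words a | uniq s) G [set:: s] * H s =
  \sum_(I : {set 'I_N} | #|I| == a) G I * \sum_(s <- words a | enumerates s I) H s.
Proof.
under [RHS]eq_bigr => I _ do rewrite mulr_sumr big_seq_cond.
rewrite big_seq_cond (exchange_big_dep (fun s => (s \in words a) && uniq s)) /=; last first.
  by move=> I s _ /andP[-> /andP[]].
apply: eq_bigr => s /andP[s_a uniq_s].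
rewrite (big_pred1 [set:: s]) // => I /=; rewrite s_a /enumerates uniq_s /=.
apply/andP/eqP => [[_ /eqP] // | ->]; split=> //.
have -> : #|[set:: s]| = #|s| by apply: eq_card => j; rewrite inE.
by rewrite (card_uniqP uniq_s) (size_words s_a).
Qed.

End Words.

Unset Implicit Arguments.

Theorem theorem4p5 (F : fieldType) (N : nat) (q : F)
  (f : ('I_N -> F) -> F)
  (f_sym : forall (s : 'S_N) (x : 'I_N -> F), f (fun k => x (s k)) = f x)
  (alpha : nat) (halpha : (1 <= alpha <= N)%N) (n : int)
  (x : 'I_N -> F) (hq : q != 0) (hx0 : forall i, x i != 0)
  (hgen : forall i j : 'I_N, i != j -> forall a b : nat, (a <= N)%N -> (b <= N)%N ->
            q ^+ a * x i != q ^+ b * x j) :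
  Mop q alpha n f x = current_sum q alpha n f x.
Proof.
have x_inj i j : i != j -> x i != x j.
  by move=> /hgen /(_ 0 0 (leq0n N) (leq0n N))%N; rewrite expr0 !mul1r.
have x_neq_qx i j : i != j -> x i != q * x j.
  move=> /hgen /(_ 0 1 (leq0n N))%N; rewrite expr0 mul1r expr1; apply.
  by case/andP: halpha; apply: leq_trans.
rewrite MopE (current_sum_words _ _ hq) // (bigID uniq) /= [X in _ + X]big1 ?addr0 => [|s];
  last exact: word_term_nonuniq.
under [RHS]eq_bigr => s uniq_s do rewrite word_term_uniq //.
rewrite sum_uniq_words_by_support; apply: eq_bigr => I /eqP cardI.
by rewrite sum_order_weight ?mulr1.
Qed.
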